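(* Let $r\geq 3$ and let $D$ be an $m$-colored semicomplete $r$-partite digraph such that every $\overrightarrow{C}_3$ and every $\overrightarrow{C}_4$ contained in $D$ is monochromatic. Then $D$ has a $2$-colored kernel.
   Context: A semicomplete $r$-partite digraph ($r\ge 2$) is a digraph whose vertex set is partitioned into $r$ nonempty independent sets (partite sets) such that for any two vertices $u,v$ in different partite sets at least one of the arcs $(u,v)$, $(v,u)$ is present (both may be present); there are no arcs inside a partite set. An $m$-colored digraph is a digraph whose arcs are each assigned one of $m$ colors. A directed path (no repeated vertices) is $j$-colored if its arcs use exactly $j$ distinct colors. ''Contained in $D$'' means being a subdigraph of $D$; a subdigraph is monochromatic if all its arcs have the same color. $\overrightarrow{C}_n$ is the directed cycle of length $n$. A $k$-colored kernel of $D$ is a nonempty set $K\subseteq V(D)$ such that (a) for every $u\in V(D)\setminus K$ there exist $v\in K$ and a $j$-colored directed path from $u$ to $v$ with $1\le j\le k$, and (b) for all distinct $u,v\in K$ there is no $j$-colored directed path from $u$ to $v$ with $1\le j\le k$. *)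

From mathcomp Require Import all_boot.
Set Implicit Arguments. Unset Strict Implicit. Unset Printing Implicit Defensive.

Section Digraphs.
Variables (V : finType) (arc : rel V).

Definition semicomplete_multipartite (r : nat) (part : V -> 'I_r) : Prop :=
  [/\ forall i : 'I_r, exists v, part v = i,
      forall u v, arc u v -> part u != part v
    & forall u v, part u != part v -> arc u v || arc v u].

Variables (C : eqType) (color : V -> V -> C).

Definition path_colors (x : V) (p : seq V) : seq C := pairmap color x p.

Definition ncolors (x : V) (p : seq V) : nat := size (undup (path_colors x p)).

Definition colored_path_le (k : nat) (x y : V) (p : seq V) : bool :=
  [&& path arc x p, uniq (x :: p), last x p == y,
      0 < ncolors x p & ncolors x p <= k].

Definition has_colored_path_le (k : nat) (x y : V) : Prop :=
  exists p : seq V, colored_path_le k x y p.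

Definition colored_kernel (k : nat) (K : {set V}) : Prop :=
  [/\ K != set0,
      forall u, u \notin K -> exists2 v, v \in K & has_colored_path_le k u v
    & forall u v, u \in K -> v \in K -> u != v -> ~ has_colored_path_le k u v].

Definition C3_monochromatic : Prop :=
  forall a b c : V, uniq [:: a; b; c] ->
    arc a b -> arc b c -> arc c a ->
    color a b = color b c /\ color b c = color c a.

Definition C4_monochromatic : Prop :=
  forall a b c d : V, uniq [:: a; b; c; d] ->
    arc a b -> arc b c -> arc c d -> arc d a ->
    [/\ color a b = color b c, color b c = color c d & color c d = color d a].

End Digraphs.

(* The proof separates a graph-theoretic statement from a purely order-
   theoretic one.

   (1) Colored paths are ordinary reachability.  Every directed path from u
       to v can be shortened, by following chords that skip one or two
       vertices, to a u-v path without such chords.  On a chordless path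
       a_0 a_1 ... a_k consecutive arcs get the same color: if a_i and a_{i+2}
       lie in different partite sets the missing chord forces the reverse
       arc a_{i+2} -> a_i, closing a monochromatic C_3; otherwise a_i (resp.
       a_{i+2}) lies in a partite set different from that of a_{i+3} (resp.
       a_{i-1}), and the reverse of the missing chord closes a
       monochromatic C_4.  Hence a
       chordless path is monochromatic as soon as it has at least 3 arcs, and
       at most 2-colored anyway.  So a 2-colored u-v path exists iff u != v
       and v is reachable from u.

   (2) The reachability relation of any finite digraph has a kernel: pick one
       vertex (the one of least rank) in every terminal strong component.

   The main theorem combines (1) and (2); the hypothesis r >= 3 is only
   needed to know that the digraph has a vertex, so that the kernel is
   nonempty. *)

From mathcomp Require Import all_boot zify.

Set Implicit Arguments.
Unset Strict Implicit.
Unset Printing Implicit Defensive.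

Lemma last_take (T : Type) (x : T) (p : seq T) (i : nat) :
  i <= size p -> last x (take i p) = nth x (x :: p) i.
Proof.
elim: p x i => [|y p IH] x [|i] //= le_i_p.
by rewrite IH //; apply: set_nth_default.
Qed.

(* Following a forward chord from the i-th vertex of the path x :: p to its
   (j+1)-th vertex yields a strictly shorter path with the same endpoints. *)
Lemma shortcut_path (T : eqType) (e : rel T) (x : T) (p : seq T) (i j : nat) :
  i < j -> j < size p -> e (nth x (x :: p) i) (nth x p j) ->
  path e x p -> uniq (x :: p) ->
  let q := take i p ++ drop j p in
  [/\ path e x q, uniq (x :: q), last x q = last x p & size q < size p].
Proof.
move=> lt_ij lt_j_p chord p_path p_uniq q.
have le_i_p : i <= size p by lia.
split.
- rewrite cat_path last_take // (drop_nth x lt_j_p) /= chord /=.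
  have path_split k :
      path e x (take k p) && path e (last x (take k p)) (drop k p).
    by rewrite -cat_path cat_take_drop.
  have /andP[-> _] := path_split i; have /andP[_] := path_split j.+1.
  by rewrite last_take.
- apply: subseq_uniq p_uniq => /=; rewrite eqxx.
  rewrite -[X in subseq _ X](cat_take_drop i p) cat_subseq //.
  by rewrite -(subnK (ltnW lt_ij)) -drop_drop drop_subseq.
- rewrite -[in RHS](cat_take_drop j.+1 p) !last_cat (drop_nth x lt_j_p) /=.
  by rewrite last_take.
- rewrite size_cat size_take size_drop; case: ifP; lia.
Qed.

Lemma ncolors_gt0 (V : finType) (C : eqType) (color : V -> V -> C)
    (x : V) (p : seq V) :
  (0 < ncolors color x p) = (0 < size p).
Proof.
case: p => [|y p] //; have : color x y \in undup (path_colors color x (y :: p)).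
  by rewrite mem_undup mem_head.
by rewrite /ncolors; case: (undup _).
Qed.

Lemma colored_path_connect (V : finType) (arc : rel V) (C : eqType)
    (color : V -> V -> C) (k : nat) (u v : V) :
  has_colored_path_le arc color k u v -> u != v /\ connect arc u v.
Proof.
case=> p /and5P[p_path p_uniq /eqP p_last ncol_pos _].
split; last by apply/connectP; exists p.
case: p p_path p_uniq p_last ncol_pos => [|y p] //= _ /andP[u_notin _] p_last _.
by apply: contraNneq u_notin => ->; rewrite -p_last mem_last.
Qed.

Section ChordlessPaths.
Variables (V : finType) (arc : rel V) (r : nat) (part : V -> 'I_r).
Variables (C : eqType) (color : V -> V -> C).
Hypothesis arc_between_parts : forall u v, arc u v -> part u != part v.
Hypothesis arc_or_reverse : forall u v, part u != part v -> arc u v || arc v u.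
Hypothesis C3_mono : C3_monochromatic arc color.
Hypothesis C4_mono : C4_monochromatic arc color.

(* A missing arc a -> c between different partite sets closes a 3-cycle. *)
Lemma triangle_colors (a b c : V) :
  uniq [:: a; b; c] -> arc a b -> arc b c -> ~~ arc a c ->
  part a != part c -> color a b = color b c.
Proof.
move=> abc_uniq ab bc not_ac /arc_or_reverse; rewrite (negbTE not_ac) => ca.
by case: (C3_mono abc_uniq ab bc ca).
Qed.

(* A missing arc a -> d between different partite sets closes a 4-cycle. *)
Lemma square_colors (a b c d : V) :
  uniq [:: a; b; c; d] -> arc a b -> arc b c -> arc c d -> ~~ arc a d ->
  part a != part d -> color a b = color b c /\ color b c = color c d.
Proof.
move=> abcd_uniq ab bc cd not_ad /arc_or_reverse; rewrite (negbTE not_ad) => da.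
by case: (C4_mono abcd_uniq ab bc cd da).
Qed.

(* The path x :: p has a chord skipping one or two of its vertices. *)
Definition short_chord (x : V) (p : seq V) : bool :=
  [exists i : 'I_(size p), exists j : 'I_(size p),
     [&& i < j, j <= i.+2 & arc (nth x (x :: p) i) (nth x p j)]].

Section OnePath.
Variables (x : V) (p : seq V).
Hypotheses (p_path : path arc x p) (p_uniq : uniq (x :: p)).
Hypothesis p_chordless : ~~ short_chord x p.

Let a (i : nat) : V := nth x (x :: p) i.
Let c (i : nat) : C := color (a i) (a i.+1).

Let a_arc (i : nat) : i < size p -> arc (a i) (a i.+1).
Proof. by move=> lt_i; move/(pathP x): p_path; apply. Qed.

Let a_inj (i j : nat) : i <= size p -> j <= size p -> (a i == a j) = (i == j).
Proof. by move=> le_i le_j; rewrite /a nth_uniq. Qed.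

(* The arcs a i -> a (i+2) and a i -> a (i+3) are missing. *)
Let no_chord (i j : nat) : i < j <= i.+2 -> j < size p -> ~~ arc (a i) (a j.+1).
Proof.
move=> /andP[lt_ij le_j] lt_j; apply/negP => chord; case/negP: p_chordless.
apply/existsP; exists (Ordinal (ltn_trans lt_ij lt_j)).
by apply/existsP; exists (Ordinal lt_j); rewrite /= lt_ij le_j.
Qed.

Lemma chordless_step (i : nat) : 2 < size p -> i.+1 < size p -> c i = c i.+1.
Proof.
move=> long lt_i.
have uniq3 (k : nat) : k.+2 <= size p -> uniq [:: a k; a k.+1; a k.+2].
  by move=> le_k; rewrite /= !inE !a_inj; lia.
have uniq4 (k : nat) : k.+3 <= size p -> uniq [:: a k; a k.+1; a k.+2; a k.+3].
  by move=> le_k; rewrite /= !inE !a_inj; lia.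
(* a i and a (i+2) in different partite sets: a 3-cycle via a (i+2) -> a i. *)
have [eq_part|ne_part] := eqVneq (part (a i)) (part (a i.+2)); last first.
  by apply: (triangle_colors (uniq3 i lt_i) (a_arc _) (a_arc lt_i)
    (no_chord _ _) ne_part); lia.
(* Same partite set: a 4-cycle a i .. a (i+3) if the path goes on ... *)
have [lt_i2|le_p_i2] := ltnP i.+2 (size p).
  have ne_part3 : part (a i) != part (a i.+3).
    by rewrite eq_part arc_between_parts ?a_arc.
  by apply: (proj1 (square_colors (uniq4 i lt_i2) (a_arc _) (a_arc _)
    (a_arc lt_i2) (no_chord _ _) ne_part3)); lia.
(* ... and otherwise a 4-cycle a (i-1) .. a (i+2), as the path is long. *)
case: i lt_i eq_part le_p_i2 => [|i] lt_i eq_part le_p_i2; first lia.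
have lt_i1 : i.+2 < size p by lia.
have ne_part3 : part (a i) != part (a i.+3).
  by rewrite -eq_part arc_between_parts ?a_arc; lia.
by apply: (proj2 (square_colors (uniq4 i lt_i1) (a_arc _) (a_arc _)
  (a_arc lt_i1) (no_chord _ _) ne_part3)); lia.
Qed.

Lemma chordless_ncolors : ncolors color x p <= 2.
Proof.
have size_cols : size (path_colors color x p) = size p by rewrite size_pairmap.
have [long|short] := ltnP 2 (size p); last first.
  by rewrite (leq_trans (size_undup _)) ?size_cols.
have c_const (i : nat) : i < size p -> c i = c 0.
  by elim: i => [//|i IH] lt_i; rewrite -chordless_step ?IH //; lia.
have sub_c0 : {subset undup (path_colors color x p) <= [:: c 0]}.
  move=> y; rewrite mem_undup => /(nthP (color x x)) [i lt_i <-].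
  rewrite size_cols in lt_i.
  by rewrite (nth_pairmap x) // inE -(c_const i lt_i).
exact: leq_trans (uniq_leq_size (undup_uniq _) sub_c0) _.
Qed.

End OnePath.

Lemma path_to_colored_path (n : nat) (x : V) (p : seq V) :
  size p <= n -> path arc x p -> uniq (x :: p) -> x != last x p ->
  has_colored_path_le arc color 2 x (last x p).
Proof.
elim: n p => [|n IH] p le_p_n p_path p_uniq x_ne_last.
  by move: le_p_n x_ne_last; rewrite leqn0 => /nilP ->; rewrite eqxx.
(* A short chord gives a strictly shorter path; otherwise p itself works. *)
have [/existsP[i /existsP[j /and3P[lt_ij _ chord]]]|chordless] :=
  boolP (short_chord x p).
  have [q_path q_uniq q_last size_q] :=
    shortcut_path lt_ij (ltn_ord j) chord p_path p_uniq.
  rewrite -q_last; apply: IH; rewrite ?q_last //.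
  by rewrite -ltnS (leq_trans size_q).
exists p; rewrite /colored_path_le p_path p_uniq eqxx.
rewrite (chordless_ncolors p_path p_uniq chordless) andbT /=.
by rewrite ncolors_gt0 lt0n size_eq0; apply: contraNneq x_ne_last => ->.
Qed.

Lemma colored_path_iff (u v : V) :
  has_colored_path_le arc color 2 u v <-> u != v /\ connect arc u v.
Proof.
split; first exact: colored_path_connect.
case=> u_ne_v /connectP[p p_path v_last]; rewrite v_last in u_ne_v *.
case: (shortenP p_path) u_ne_v => q q_path q_uniq _ u_ne_last.
exact: path_to_colored_path (leqnn _) q_path q_uniq u_ne_last.
Qed.

End ChordlessPaths.

Section ReachabilityKernel.
Variables (T : finType) (e : rel T).

Definition terminal (w : T) : bool :=
  [forall z, connect e w z ==> connect e z w].

(* A vertex minimizing the size of its forward closure is terminal. *)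
Lemma terminal_reachable (u : T) : exists2 w, connect e u w & terminal w.
Proof.
pose reach w := [set z | connect e w z].
have [w u_w min_w] := arg_minnP (fun w => #|reach w|) (connect0 e u).
exists w => //; apply/forallP => z; apply/implyP => w_z.
have sub_zw : reach z \subset reach w.
  by apply/subsetP => y; rewrite !inE; apply: connect_trans.
have [_ eq_card] := subset_leqif_card sub_zw.
have /subsetP/(_ w) : reach w \subset reach z.
  rewrite -eq_card eqn_leq subset_leq_card //.
  exact: min_w (connect_trans u_w w_z).
by rewrite !inE connect0 => /(_ isT).
Qed.

(* One representative, of least rank, of each terminal strong component. *)
Definition reach_kernel : {set T} :=
  [set v | terminal v &&
           [forall w, connect e v w ==> (enum_rank v <= enum_rank w)]].

(* From u, go to a reachable terminal vertex of least rank: it is the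
   representative of its component. *)
Lemma reach_kernel_absorbing (u : T) :
  exists2 v, v \in reach_kernel & connect e u v.
Proof.
have [w0 u_w0 term_w0] := terminal_reachable u.
have [|v /andP[u_v term_v] min_v] :=
  @arg_minnP _ w0 (fun v => connect e u v && terminal v)
    (fun v => nat_of_ord (enum_rank v)); first by rewrite u_w0.
exists v => //; rewrite inE term_v; apply/forallP => w; apply/implyP => v_w.
apply: min_v; rewrite (connect_trans u_v v_w); apply/forallP => z.
apply/implyP => w_z; apply: (connect_trans _ v_w).
by move/forallP/(_ z)/implyP: term_v; apply; apply: connect_trans w_z.
Qed.

(* Two representatives reaching each other lie in the same terminal
   component, hence have the same rank. *)
Lemma reach_kernel_independent (u v : T) :
  u \in reach_kernel -> v \in reach_kernel -> connect e u v -> u = v.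
Proof.
rewrite !inE => /andP[term_u /forallP min_u] /andP[_ /forallP min_v] u_v.
have v_u : connect e v u by move/forallP/(_ v)/implyP: term_u; apply.
have /implyP/(_ u_v) le_uv := min_u v; have /implyP/(_ v_u) le_vu := min_v u.
by apply/enum_rank_inj/ord_inj/eqP; rewrite eqn_leq le_uv le_vu.
Qed.

End ReachabilityKernel.

Theorem mainTheorem8 (V : finType) (arc : rel V) (r : nat) (part : V -> 'I_r)
  (m : nat) (color : V -> V -> 'I_m) :
  3 <= r ->
  semicomplete_multipartite arc part ->
  C3_monochromatic arc color ->
  C4_monochromatic arc color ->
  exists K : {set V}, colored_kernel arc color 2 K.
Proof.
move=> r_ge3 [parts_nonempty arc_between arc_or_rev] C3_mono C4_mono.
have colored_iff := colored_path_iff arc_between arc_or_rev C3_mono C4_mono.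
(* Some vertex exists, so the kernel is nonempty. *)
have [v0 _] := parts_nonempty (Ordinal (ltnW (ltnW r_ge3))).
exists (reach_kernel arc); split.
- by have [v v_in _] := reach_kernel_absorbing arc v0; apply/set0Pn; exists v.
- move=> u u_out; have [v v_in u_v] := reach_kernel_absorbing arc u.
  exists v => //; apply/colored_iff; split => //.
  by apply: contraNneq u_out => ->.
- move=> u v u_in v_in u_ne_v /colored_iff[_ u_v].
  by case/eqP: u_ne_v; apply: reach_kernel_independent u_v.
Qed.
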